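(* Let $h:\omega\to\omega$ satisfy $1<h(n)<\omega$ for all $n$. Then $\mathbb{PT}_h$ is Cohen preserving.
   Context: $\mathbb{PT}_h$ is the poset of trees $p\subseteq\omega^{<\omega}$ such that: for all $t\in p$ and $l\in\mathrm{dom}(t)$, $t(l)<h(l)$; every $t\in p$ has either exactly one or exactly $h(l(t))$ immediate successors in $p$ (where $l(t)$ is the length of $t$); and every $t\in p$ has an extension $t'\in p$ with $h(l(t'))$ immediate successors in $p$. The order is inclusion. A forcing notion $\mathbb P$ is Cohen preserving if for every $p\in\mathbb P$ and every $\mathbb P$-name $\dot D$ with $p\Vdash$ ''$\dot D\subseteq 2^{<\omega}$ is dense open'', there are a dense set $E\subseteq 2^{<\omega}$ in the ground model and $q\le p$ with $q\Vdash \check E\subseteq\dot D$. *)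

From Stdlib Require Import List Arith.
Import ListNotations.

(** Sequences: ω^{<ω} = list nat, 2^{<ω} = list bool; s ⊆ t (t extends s). *)
Definition prefix {A : Type} (s t : list A) : Prop := exists u, t = s ++ u.

(** A P-name for a subset of the ground-model set 2^{<ω} is (up to the
    standard equivalence) a set of pairs (š, r); we represent it as a relation
    [N : list bool -> P -> Prop] with [N s r] meaning (š, r) ∈ Ḋ. *)
Section Forcing.
Variables (P : Type) (le : P -> P -> Prop).

Definition name := list bool -> P -> Prop.

(** r ⊩ š ∈ Ḋ  iff the set of r' with r' ≤ r'' for some (š, r'') ∈ Ḋ is
    dense below r (ground equality of check names). *)
Definition forces_mem (N : name) (r : P) (s : list bool) : Prop :=
  forall r1, le r1 r -> exists r2, le r2 r1 /\ exists r3, le r2 r3 /\ N s r3.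

(** p ⊩ "Ḋ ⊆ 2^{<ω} is dense open", unfolded through the forcing clauses
    (quantifiers range over 2^{<ω}, which is absolute). *)
Definition forces_dense_open (N : name) (p : P) : Prop :=
  (forall s t r, prefix s t -> le r p -> forces_mem N r s -> forces_mem N r t)
  /\ (forall s r, le r p ->
        exists r', le r' r /\ exists t, prefix s t /\ forces_mem N r' t).

Definition dense_seq (E : list bool -> Prop) : Prop :=
  forall s, exists t, prefix s t /\ E t.

Definition cohen_preserving : Prop :=
  forall (p : P) (N : name), forces_dense_open N p ->
    exists E : list bool -> Prop, dense_seq E /\
      exists q, le q p /\ forall s, E s -> forces_mem N q s.

End Forcing.

Definition PT_tree (h : nat -> nat) (p : list nat -> Prop) : Prop :=
  p [] /\ (forall s u, p (s ++ u) -> p s) /\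
  (forall t, p t -> forall l, l < length t -> nth l t 0 < h l) /\
  (* exactly one, or exactly h(|t|) immediate successors (all of them, as
     successors t^i satisfy i < h(|t|)) *)
  (forall t, p t ->
     (exists! i, p (t ++ [i])) \/
     (forall i, p (t ++ [i]) <-> i < h (length t))) /\
  (forall t, p t -> exists u, p (t ++ u) /\
     forall i, p ((t ++ u) ++ [i]) <-> i < h (length (t ++ u))).

Record PT (h : nat -> nat) : Type := MkPT {
  tree : list nat -> Prop;
  tree_ok : PT_tree h tree }.

Definition PT_le (h : nat -> nat) (q p : PT h) : Prop :=
  forall t, tree h q t -> tree h p t.

From Stdlib Require Import List Arith PArith Lia Classical ClassicalEpsilon.
Import ListNotations.

(* A fusion argument.  At stage n we hold a condition c_n and a level L_n.
   Going through the finitely many nodes σ of c_n at level L_n one at a time,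
   we shrink the part of the condition above σ until it forces some t ∈ Ḋ,
   where t extends the n-th binary sequence; since Ḋ is forced to be open,
   each new t may extend the previous one, so a single t_n works for all σ.
   At the same time every such σ is made to pass through a splitting node below
   a new level L_{n+1}, and nothing changes up to level L_n.  The intersection
   q of the c_n is then a condition below p.  Any r ≤ q, restricted to one of
   its nodes at level L_n, lies above a single σ of c_{n+1}, so q forces every
   t_n into Ḋ, and the t_n form a dense set of the ground model. *)

#[local] Arguments tree {h} _ _.
#[local] Arguments PT_le {h} _ _.

Section Prefix.
Context {A : Type}.

Definition comparable (x y : list A) : Prop := prefix x y \/ prefix y x.

Lemma prefix_refl (s : list A) : prefix s s.
Proof. exists []. now rewrite app_nil_r. Qed.

Lemma prefix_app (s u : list A) : prefix s (s ++ u).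
Proof. now exists u. Qed.

Lemma prefix_trans (a b c : list A) : prefix a b -> prefix b c -> prefix a c.
Proof. intros [u ->] [v ->]. exists (u ++ v). now rewrite app_assoc. Qed.

Lemma prefix_length (a b : list A) : prefix a b -> length a <= length b.
Proof. intros [u ->]. rewrite length_app. lia. Qed.

Lemma prefix_length_eq (a b : list A) : prefix a b -> length b <= length a -> a = b.
Proof.
  intros [u ->] Hl. rewrite length_app in Hl.
  destruct u; [now rewrite app_nil_r | simpl in Hl; lia].
Qed.

Lemma prefix_firstn (a b : list A) : prefix a b -> firstn (length a) b = a.
Proof.
  intros [u ->]. rewrite firstn_app, Nat.sub_diag, firstn_O, app_nil_r.
  apply firstn_all.
Qed.

Lemma prefixes_comparable (a b w : list A) :
  prefix a w -> prefix b w -> comparable a b.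
Proof.
  assert (Hshort : forall a b, prefix a w -> prefix b w ->
            length a <= length b -> prefix a b).
  { intros x y Hx Hy Hl. rewrite <- (prefix_firstn x w Hx), <- (prefix_firstn y w Hy).
    exists (skipn (length x) (firstn (length y) w)).
    rewrite <- (firstn_skipn (length x) (firstn (length y) w)) at 1.
    now rewrite firstn_firstn, Nat.min_l. }
  intros Ha Hb. destruct (le_ge_dec (length a) (length b));
    [left | right]; apply Hshort; auto.
Qed.

Lemma comparable_length_eq (x y : list A) :
  comparable x y -> length x = length y -> x = y.
Proof.
  intros [H|H] Hl; [|symmetry]; apply prefix_length_eq; auto; lia.
Qed.

Lemma prefix_snoc (s t : list A) (i : A) :
  prefix s (t ++ [i]) -> ~ prefix s t -> s = t ++ [i].
Proof.
  intros Hs Hst.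
  destruct (prefixes_comparable s t (t ++ [i]) Hs (prefix_app t [i])) as [|Hts];
    [contradiction|].
  apply prefix_length_eq; [exact Hs|]. rewrite length_app; simpl.
  destruct (Nat.eq_dec (length s) (length t)) as [Hl|Hl].
  - exfalso. apply Hst. rewrite (prefix_length_eq t s Hts); [apply prefix_refl | lia].
  - apply prefix_length in Hts. lia.
Qed.

Lemma comparable_snoc (t : list A) (i j : A) (v : list A) :
  comparable (t ++ [i]) (t ++ j :: v) <-> i = j.
Proof.
  split.
  - intros [[w Hw]|[w Hw]]; rewrite <- app_assoc in Hw; apply app_inv_head in Hw;
      simpl in Hw; congruence.
  - intros ->. left. exists v. now rewrite <- app_assoc.
Qed.

End Prefix.

Section PTConditions.
Context {h : nat -> nat}.

Definition succ_ok (T : list nat -> Prop) (t : list nat) : Prop :=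
  (exists! i, T (t ++ [i])) \/ (forall i, T (t ++ [i]) <-> i < h (length t)).

Definition splitting (T : list nat -> Prop) (u : list nat) : Prop :=
  forall i, T (u ++ [i]) <-> i < h (length u).

Lemma tree_nil (c : PT h) : tree c [].
Proof. exact (proj1 (tree_ok _ c)). Qed.

Lemma tree_prefix (c : PT h) s t : prefix s t -> tree c t -> tree c s.
Proof. intros [u ->]. destruct (tree_ok _ c) as (_ & H & _). apply H. Qed.

Lemma tree_bound (c : PT h) t : tree c t -> forall l, l < length t -> nth l t 0 < h l.
Proof. destruct (tree_ok _ c) as (_ & _ & H & _). apply H. Qed.

Lemma tree_succ_ok (c : PT h) t : tree c t -> succ_ok (tree c) t.
Proof. destruct (tree_ok _ c) as (_ & _ & _ & H & _). apply H. Qed.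

Lemma tree_splitting_ext (c : PT h) t :
  tree c t -> exists u, tree c (t ++ u) /\ splitting (tree c) (t ++ u).
Proof. destruct (tree_ok _ c) as (_ & _ & _ & _ & H). apply H. Qed.

Lemma succ_ok_ext (T T' : list nat -> Prop) t :
  (forall i, T (t ++ [i]) <-> T' (t ++ [i])) -> succ_ok T t -> succ_ok T' t.
Proof.
  intros E [[i [Hi Hu]]|H].
  - left. exists i. split; [now apply E | intros j Hj; now apply Hu, E].
  - right. intro i. rewrite <- E. apply H.
Qed.

Lemma splitting_ext (T T' : list nat -> Prop) u :
  (forall i, T (u ++ [i]) <-> T' (u ++ [i])) -> splitting T u -> splitting T' u.
Proof. intros E H i. rewrite <- E. apply H. Qed.

Lemma PT_le_refl (c : PT h) : PT_le c c.
Proof. now intros t. Qed.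

Lemma PT_le_trans (a b c : PT h) : PT_le a b -> PT_le b c -> PT_le a c.
Proof. intros Hab Hbc t Ht. now apply Hbc, Hab. Qed.

Lemma PT_tree_intro (c : PT h) (T : list nat -> Prop) :
  (forall t, T t -> tree c t) -> T [] -> (forall s u, T (s ++ u) -> T s) ->
  (forall t, T t -> succ_ok T t) ->
  (forall t, T t -> exists u, T (t ++ u) /\ splitting T (t ++ u)) ->
  PT_tree h T.
Proof.
  intros Hsub Hnil Hpre Hsucc Hsplit.
  split; [exact Hnil | split; [exact Hpre | split; [|split; [exact Hsucc | exact Hsplit]]]].
  intros t Ht. exact (tree_bound c t (Hsub t Ht)).
Qed.

Definition restrict_tree (c : PT h) (u t : list nat) : Prop :=
  tree c t /\ comparable t u.

Lemma restrict_tree_above (c : PT h) u x :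
  prefix u x -> restrict_tree c u x <-> tree c x.
Proof. unfold restrict_tree, comparable. tauto. Qed.

Lemma restrict_splitting (c : PT h) u x : prefix u x ->
  tree c x -> splitting (tree c) x ->
  restrict_tree c u x /\ splitting (restrict_tree c u) x.
Proof.
  intros Hux Hx Hsplit. split; [now apply restrict_tree_above|].
  apply (splitting_ext (tree c)); [|exact Hsplit].
  intro i. symmetry. apply restrict_tree_above.
  exact (prefix_trans _ _ _ Hux (prefix_app x [i])).
Qed.

Lemma restrict_PT_tree (c : PT h) u : tree c u -> PT_tree h (restrict_tree c u).
Proof.
  intro Hu. apply (PT_tree_intro c).
  - now intros t [].
  - split; [apply tree_nil | left; now exists u].
  - intros s w [Hsw Hcmp]. split; [exact (tree_prefix c s _ (prefix_app s w) Hsw)|].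
    destruct Hcmp as [Hsu|Hus].
    + left. exact (prefix_trans _ _ _ (prefix_app s w) Hsu).
    + exact (prefixes_comparable s u _ (prefix_app s w) Hus).
  - intros t [Ht Hcmp]. destruct (classic (prefix u t)) as [Hut|Hut].
    + apply (succ_ok_ext (tree c)); [|exact (tree_succ_ok c t Ht)].
      intro i. symmetry. apply restrict_tree_above.
      exact (prefix_trans _ _ _ Hut (prefix_app t [i])).
    + destruct Hcmp as [[w ->]|]; [|contradiction].
      destruct w as [|j v]; [rewrite app_nil_r in Hut; now destruct Hut; apply prefix_refl|].
      left. exists j. split.
      * split; [|now apply comparable_snoc].
        apply (tree_prefix c _ (t ++ j :: v)); [exists v; now rewrite <- app_assoc | exact Hu].
      * intros i [_ Hi]. symmetry. now apply comparable_snoc in Hi.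
  - intros t [Ht [[w ->]|Hut]].
    + destruct (tree_splitting_ext c _ Hu) as [v [Hv Hsplit]].
      exists (w ++ v). rewrite app_assoc.
      apply restrict_splitting; [apply prefix_app | exact Hv | exact Hsplit].
    + destruct (tree_splitting_ext c t Ht) as [v [Hv Hsplit]].
      exists v. apply restrict_splitting; [|exact Hv | exact Hsplit].
      exact (prefix_trans _ _ _ Hut (prefix_app t v)).
Qed.

Definition restrict (c : PT h) u (Hu : tree c u) : PT h :=
  MkPT h (restrict_tree c u) (restrict_PT_tree c u Hu).

Lemma restrict_le (c : PT h) u Hu : PT_le (restrict c u Hu) c.
Proof. now intros t []. Qed.

Lemma restrict_mem (c : PT h) u Hu : tree (restrict c u Hu) u.
Proof. split; [exact Hu | left; apply prefix_refl]. Qed.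

(** * Amalgamation: replacing the part of [c] above [σ] by [r] *)

Section Graft.
Variables (c r : PT h) (σ : list nat).
Hypotheses (r_le_c : PT_le r c) (r_σ : tree r σ).

Definition graft_tree (t : list nat) : Prop :=
  (prefix σ t /\ tree r t) \/ (~ prefix σ t /\ tree c t).

Lemma graft_tree_above x : prefix σ x -> graft_tree x <-> tree r x.
Proof. unfold graft_tree. tauto. Qed.

Lemma graft_tree_off_succ x i :
  ~ prefix σ x -> graft_tree (x ++ [i]) <-> tree c (x ++ [i]).
Proof.
  intro Hx. unfold graft_tree. destruct (classic (prefix σ (x ++ [i]))) as [H|H].
  - pose proof (prefix_snoc σ x i H Hx) as E. rewrite <- E.
    split; [intros [[_ Hr]|[_ Hc]]; [exact (r_le_c _ Hr) | exact Hc]|].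
    intros _. left. split; [apply prefix_refl | exact r_σ].
  - tauto.
Qed.

Lemma graft_tree_sub x : graft_tree x -> tree c x.
Proof. intros [[_ H]|[_ H]]; [apply r_le_c|]; exact H. Qed.

Lemma graft_splitting_above x : prefix σ x -> tree r x -> splitting (tree r) x ->
  graft_tree x /\ splitting graft_tree x.
Proof.
  intros Hσx Hx Hsplit. split; [now apply graft_tree_above|].
  apply (splitting_ext (tree r)); [|exact Hsplit].
  intro i. symmetry. apply graft_tree_above.
  exact (prefix_trans _ _ _ Hσx (prefix_app x [i])).
Qed.

Lemma graft_splitting_off x : ~ prefix σ x -> tree c x -> splitting (tree c) x ->
  graft_tree x /\ splitting graft_tree x.
Proof.
  intros Hσx Hx Hsplit. split; [now right|].
  apply (splitting_ext (tree c)); [|exact Hsplit].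
  intro i. symmetry. now apply graft_tree_off_succ.
Qed.

Lemma graft_PT_tree : PT_tree h graft_tree.
Proof.
  apply (PT_tree_intro c).
  - exact graft_tree_sub.
  - destruct (classic (prefix σ [])); [left|right]; split; auto; apply tree_nil.
  - intros s w [[Hσ Hsw]|[Hσ Hsw]].
    + assert (Hs : tree r s) by exact (tree_prefix r s _ (prefix_app s w) Hsw).
      destruct (classic (prefix σ s)); [left|right]; split; auto.
    + right. split.
      * intro Hσs. exact (Hσ (prefix_trans _ _ _ Hσs (prefix_app s w))).
      * exact (tree_prefix c s _ (prefix_app s w) Hsw).
  - intros t [[Hσt Ht]|[Hσt Ht]].
    + apply (succ_ok_ext (tree r)); [|exact (tree_succ_ok r t Ht)].
      intro i. symmetry. apply graft_tree_above.
      exact (prefix_trans _ _ _ Hσt (prefix_app t [i])).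
    + apply (succ_ok_ext (tree c)); [|exact (tree_succ_ok c t Ht)].
      intro i. symmetry. now apply graft_tree_off_succ.
  - intros t [[Hσt Ht]|[Hσt Ht]].
    + destruct (tree_splitting_ext r t Ht) as [v [Hv Hsplit]]. exists v.
      apply graft_splitting_above; auto.
      exact (prefix_trans _ _ _ Hσt (prefix_app t v)).
    + destruct (classic (prefix t σ)) as [[w Hw]|Htσ].
      * destruct (tree_splitting_ext r σ r_σ) as [v [Hv Hsplit]].
        exists (w ++ v). rewrite app_assoc, <- Hw.
        apply graft_splitting_above; auto. apply prefix_app.
      * destruct (tree_splitting_ext c t Ht) as [v [Hv Hsplit]]. exists v.
        apply graft_splitting_off; auto. intro Hσv.
        destruct (prefixes_comparable t σ _ (prefix_app t v) Hσv); contradiction.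
Qed.

Definition graft : PT h := MkPT h graft_tree graft_PT_tree.

Lemma graft_le : PT_le graft c.
Proof. exact graft_tree_sub. Qed.

Lemma graft_agree x : length x <= length σ -> tree c x -> tree graft x.
Proof.
  intros Hl Hx. destruct (classic (prefix σ x)) as [Hσx|Hσx]; [|now right].
  left. split; [exact Hσx|]. now rewrite <- (prefix_length_eq σ x Hσx Hl).
Qed.

Lemma le_graft_comparable (r1 : PT h) :
  PT_le r1 graft -> (forall x, tree r1 x -> comparable x σ) -> PT_le r1 r.
Proof.
  intros Hr1 Hcmp x Hx. destruct (Hcmp x Hx) as [Hxσ|Hσx].
  - exact (tree_prefix r x σ Hxσ r_σ).
  - now apply (graft_tree_above x Hσx), Hr1.
Qed.

End Graft.

Hypothesis h_pos : forall n, 0 < h n.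

Lemma tree_extend (c : PT h) t k : tree c t -> exists v, length v = k /\ tree c (t ++ v).
Proof.
  intro Ht. induction k as [|k [v [Hl Hv]]].
  - exists []. now rewrite app_nil_r.
  - destruct (tree_succ_ok c _ Hv) as [[i [Hi _]]|H].
    + exists (v ++ [i]). rewrite length_app, app_assoc. simpl. split; [lia | exact Hi].
    + exists (v ++ [0]). rewrite length_app, app_assoc. simpl. split; [lia|].
      apply H, h_pos.
Qed.

Lemma mem_of_le_restrict (c : PT h) u Hu (r : PT h) :
  PT_le r (restrict c u Hu) -> tree r u.
Proof.
  intro Hr. destruct (tree_extend r [] (length u) (tree_nil r)) as [x [Hl Hx]].
  simpl in Hx. destruct (Hr x Hx) as [_ Hcmp].
  now rewrite <- (comparable_length_eq x u Hcmp Hl).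
Qed.

Definition splits_below (c : PT h) (σ : list nat) (M : nat) : Prop :=
  exists u, prefix σ u /\ length u < M /\ tree c u /\ splitting (tree c) u.

Definition fusion_link (c : PT h) (L : nat) (c' : PT h) (L' : nat) : Prop :=
  PT_le c' c /\ L < L' /\
  (forall x, length x <= L -> tree c x -> tree c' x) /\
  (forall σ, tree c' σ -> length σ = L -> splits_below c' σ L').

Section Fusion.
Variables (c : nat -> PT h) (L : nat -> nat).
Hypothesis link : forall n, fusion_link (c n) (L n) (c (S n)) (L (S n)).

Definition fusion_tree (x : list nat) : Prop := forall n, tree (c n) x.

Lemma fusion_level_ge n : n <= L n.
Proof. induction n as [|n IH]; [lia|]. destruct (link n) as (_ & HL & _). lia. Qed.

Lemma fusion_level_mono n m : n <= m -> L n <= L m.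
Proof. induction 1 as [|m _ IH]; [lia|]. destruct (link m) as (_ & HL & _). lia. Qed.

Lemma fusion_seq_le n m : n <= m -> PT_le (c m) (c n).
Proof.
  induction 1 as [|m _ IH]; [apply PT_le_refl|].
  destruct (link m) as (Hle & _). exact (PT_le_trans _ _ _ Hle IH).
Qed.

Lemma fusion_seq_agree n m x : n <= m -> length x <= L n -> tree (c n) x -> tree (c m) x.
Proof.
  intros Hnm Hx. induction Hnm as [|m Hnm IH]; [tauto|].
  intro Hcx. destruct (link m) as (_ & _ & Hagree & _).
  apply Hagree; [pose proof (fusion_level_mono n m Hnm); lia | exact (IH Hcx)].
Qed.

Lemma fusion_tree_iff n x : length x <= L n -> fusion_tree x <-> tree (c n) x.
Proof.
  intro Hx. split; [intro H; apply H|]. intros Hcx m.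
  destruct (le_ge_dec n m) as [Hnm|Hmn].
  - exact (fusion_seq_agree n m x Hnm Hx Hcx).
  - exact (fusion_seq_le m n Hmn x Hcx).
Qed.

Lemma fusion_PT_tree : PT_tree h fusion_tree.
Proof.
  apply (PT_tree_intro (c 0)).
  - intros t Ht. apply Ht.
  - intro n. apply tree_nil.
  - intros s w H n. exact (tree_prefix (c n) s _ (prefix_app s w) (H n)).
  - intros t Ht. apply (succ_ok_ext (tree (c (S (length t))))).
    + intro i. symmetry. apply fusion_tree_iff.
      pose proof (fusion_level_ge (S (length t))). rewrite length_app. simpl. lia.
    + apply tree_succ_ok, Ht.
  - intros t Ht. set (n := length t).
    pose proof (fusion_level_ge n) as Hn.
    destruct (link n) as (_ & _ & _ & Hsplit).
    destruct (tree_extend (c (S n)) t (L n - n) (Ht (S n))) as [v [Hvl Hv]].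
    destruct (Hsplit (t ++ v) Hv) as [u [[w ->] [Hul [Hu Hsplit_u]]]];
      [rewrite length_app; unfold n in *; lia|].
    exists (v ++ w). rewrite app_assoc. split.
    + apply (fusion_tree_iff (S n)); [lia | exact Hu].
    + apply (splitting_ext (tree (c (S n)))); [|exact Hsplit_u].
      intro i. symmetry. apply fusion_tree_iff. rewrite length_app. simpl. lia.
Qed.

Definition fusion : PT h := MkPT h fusion_tree fusion_PT_tree.

Lemma fusion_le n : PT_le fusion (c n).
Proof. intros x Hx. apply Hx. Qed.

End Fusion.
End PTConditions.

Arguments succ_ok : clear implicits.
Arguments splitting : clear implicits.

Section ForcesMem.
Variables (P : Type) (le : P -> P -> Prop) (N : name P).
Hypotheses (le_refl : forall r, le r r)
  (le_trans : forall a b c, le a b -> le b c -> le a c).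

Lemma forces_mem_le r r' s : le r' r -> forces_mem P le N r s -> forces_mem P le N r' s.
Proof. intros Hr' H r1 Hr1. exact (H r1 (le_trans _ _ _ Hr1 Hr')). Qed.

Lemma forces_mem_of_dense r s :
  (forall r1, le r1 r -> exists r2, le r2 r1 /\ forces_mem P le N r2 s) ->
  forces_mem P le N r s.
Proof.
  intros H r1 Hr1. destruct (H r1 Hr1) as [r2 [Hr2 Hf]].
  destruct (Hf r2 (le_refl r2)) as [r3 [Hr3 HN]].
  exists r3. split; [exact (le_trans _ _ _ Hr3 Hr2) | exact HN].
Qed.

End ForcesMem.

Fixpoint level_seqs (h : nat -> nat) (n : nat) : list (list nat) :=
  match n with
  | 0 => [[]]
  | S n => flat_map (fun σ => map (fun i => σ ++ [i]) (seq 0 (h n))) (level_seqs h n)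
  end.

Lemma in_level_seqs h σ :
  (forall l, l < length σ -> nth l σ 0 < h l) -> In σ (level_seqs h (length σ)).
Proof.
  induction σ as [|i σ IH] using rev_ind; intro Hb; [now left|].
  rewrite length_app, Nat.add_1_r. apply in_flat_map. exists σ. split.
  - apply IH. intros l Hl. rewrite <- (app_nth1 σ [i] 0 Hl).
    apply Hb. rewrite length_app. lia.
  - apply (in_map (fun j => σ ++ [j])), in_seq. specialize (Hb (length σ)).
    rewrite nth_middle, length_app in Hb. simpl in Hb. lia.
Qed.

Fixpoint bits_of_pos (x : positive) : list bool :=
  match x with
  | xH => []
  | xO y => false :: bits_of_pos y
  | xI y => true :: bits_of_pos y
  end.

Fixpoint pos_of_bits (s : list bool) : positive :=
  match s with
  | [] => xH
  | b :: s => if b then xI (pos_of_bits s) else xO (pos_of_bits s)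
  end.

Definition bits_of_nat (n : nat) : list bool := bits_of_pos (Pos.of_nat n).

Lemma bits_of_nat_surj s : exists n, bits_of_nat n = s.
Proof.
  exists (Pos.to_nat (pos_of_bits s)). unfold bits_of_nat. rewrite Pos2Nat.id.
  induction s as [|[|] s IH]; simpl; congruence.
Qed.

Section CohenPreserving.
Variables (h : nat -> nat) (h_pos : forall n, 0 < h n) (p : PT h) (N : name (PT h)).
Hypothesis N_dense_open : forces_dense_open (PT h) PT_le N p.

Notation forces := (forces_mem (PT h) PT_le N).

Lemma forces_le (r r' : PT h) t : PT_le r' r -> forces r t -> forces r' t.
Proof. exact (forces_mem_le _ _ N (@PT_le_trans h) r r' t). Qed.

(* [c ↾ σ ⊩ t ∈ Ḋ], stated without building [c ↾ σ]. *)
Definition forces_above (c : PT h) (σ : list nat) (t : list bool) : Prop :=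
  forall r : PT h, PT_le r c -> (forall x, tree r x -> comparable x σ) -> forces r t.

Lemma dense_splitting_condition (c : PT h) a t : PT_le c p -> tree c a ->
  exists (r : PT h) t' u, PT_le r c /\ prefix t t' /\ forces r t' /\
    prefix a u /\ tree r u /\ splitting h (tree r) u /\
    (forall x, tree r x -> comparable x u).
Proof.
  intros Hc Ha. set (r1 := restrict c a Ha).
  destruct (proj2 N_dense_open t r1 (PT_le_trans _ _ _ (restrict_le c a Ha) Hc))
    as [r0 [Hr0 [t' [Htt' Hf]]]].
  pose proof (mem_of_le_restrict h_pos c a Ha r0 Hr0) as Ha0.
  destruct (tree_splitting_ext r0 a Ha0) as [v [Hv Hsplit]].
  set (r := restrict r0 (a ++ v) Hv).
  assert (Hr : PT_le r r0) by apply restrict_le.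
  exists r, t', (a ++ v).
  split; [|split; [exact Htt'|split; [|split; [apply prefix_app|split]]]].
  - exact (PT_le_trans _ _ _ Hr (PT_le_trans _ _ _ Hr0 (restrict_le c a Ha))).
  - exact (forces_le _ _ _ Hr Hf).
  - apply restrict_mem.
  - split; [exact (proj2 (restrict_splitting r0 _ _ (prefix_refl _) Hv Hsplit))|].
    now intros x [].
Qed.

Section Step.
Variables (c : PT h) (L : nat) (s : list bool).
Hypothesis c_le_p : PT_le c p.

(* Invariant while the nodes of [c] at level [L] are handled one by one; [D] lists
   those already handled. *)
Definition step_inv (D : list (list nat)) (c' : PT h) (L' : nat) (t : list bool) : Prop :=
  PT_le c' c /\ L < L' /\ prefix s t /\
  (forall x, length x <= L -> tree c x -> tree c' x) /\
  (forall σ, In σ D -> tree c' σ -> length σ = L ->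
     forces_above c' σ t /\ splits_below c' σ L').

Lemma step_inv_skip D a c' L' t : ~ (tree c' a /\ length a = L) ->
  step_inv D c' L' t -> step_inv (a :: D) c' L' t.
Proof.
  intros Hskip (Hc' & HL' & Hst & Hagree & Hinv). do 4 (split; [assumption|]).
  intros σ [<-|Hσ] Hσc Hσl; [tauto | exact (Hinv σ Hσ Hσc Hσl)].
Qed.

Lemma step_inv_handle D a c' L' t : tree c' a -> length a = L ->
  step_inv D c' L' t -> exists c'' L'' t', step_inv (a :: D) c'' L'' t'.
Proof.
  intros Ha Hal (Hc' & HL' & Hst & Hagree & Hinv).
  assert (Hc'p : PT_le c' p) by exact (PT_le_trans _ _ _ Hc' c_le_p).
  destruct (dense_splitting_condition c' a t Hc'p Ha)
    as (r & t' & u & Hr & Htt' & Hf & Hau & Hu & Hsplit & Hcmp).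
  pose proof (tree_prefix r a u Hau Hu) as Hra.
  set (c'' := graft c' r a Hr Hra).
  assert (Hc'' : PT_le c'' c') by apply graft_le.
  exists c'', (max L' (S (length u))), t'.
  split; [|split; [lia|split; [|split]]].
  - exact (PT_le_trans _ _ _ Hc'' Hc').
  - exact (prefix_trans _ _ _ Hst Htt').
  - intros x Hx Hcx. apply graft_agree; [lia | exact (Hagree x Hx Hcx)].
  - intros σ Hσ Hσc Hσl. destruct (classic (σ = a)) as [->|Hσa].
    + split.
      * intros r1 Hr1 Hcmp1.
        exact (forces_le _ _ _ (le_graft_comparable c' r a Hr Hra r1 Hr1 Hcmp1) Hf).
      * exists u. split; [exact Hau|split; [lia|]].
        exact (graft_splitting_above c' r a u Hau Hu Hsplit).
    + destruct Hσ as [|Hσ]; [congruence|].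
      destruct (Hinv σ Hσ (Hc'' σ Hσc) Hσl)
        as [Hforce [u0 (Hσu0 & Hu0l & Hu0 & Hsplit0)]].
      split.
      (* [Ḋ] is forced open, so [t ∈ Ḋ] already forced gives [t' ∈ Ḋ]. *)
      * intros r1 Hr1 Hcmp1. pose proof (PT_le_trans _ _ _ Hr1 Hc'') as Hr1c'.
        apply (proj1 N_dense_open t t' r1 Htt'); [exact (PT_le_trans _ _ _ Hr1c' Hc'p)|].
        exact (Hforce r1 Hr1c' Hcmp1).
      * exists u0. split; [exact Hσu0|split; [lia|]].
        apply (graft_splitting_off c' r a Hr Hra u0); auto. intro Hau0. apply Hσa.
        apply comparable_length_eq; [exact (prefixes_comparable σ a u0 Hσu0 Hau0) | lia].
Qed.

Lemma step_inv_exists D : exists c' L' t, step_inv D c' L' t.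
Proof.
  induction D as [|a D [c' [L' [t H]]]].
  - exists c, (S L), s.
    split; [apply PT_le_refl|split; [lia|split; [apply prefix_refl|split]]].
    + tauto.
    + intros _ [].
  - destruct (classic (tree c' a /\ length a = L)) as [[Ha Hal]|Hskip].
    + exact (step_inv_handle D a c' L' t Ha Hal H).
    + exists c', L', t. exact (step_inv_skip D a c' L' t Hskip H).
Qed.

End Step.

Definition step_spec (c : PT h) L s (c' : PT h) L' t : Prop :=
  fusion_link c L c' L' /\ prefix s t /\
  forall σ, tree c' σ -> length σ = L -> forces_above c' σ t.

Lemma step_exists (c : PT h) L s : PT_le c p -> exists c' L' t, step_spec c L s c' L' t.
Proof.
  intro Hc. destruct (step_inv_exists c L s Hc (level_seqs h L))
    as (c' & L' & t & Hc' & HL' & Hst & Hagree & Hinv).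
  assert (Hlevel : forall σ, tree c' σ -> length σ = L ->
            forces_above c' σ t /\ splits_below c' σ L').
  { intros σ Hσ Hσl. apply Hinv; auto. rewrite <- Hσl. apply in_level_seqs.
    exact (tree_bound c' σ Hσ). }
  exists c', L', t. split; [|split; [exact Hst|]].
  - split; [exact Hc'|split; [exact HL'|split; [exact Hagree|]]].
    intros σ Hσ Hσl. exact (proj2 (Hlevel σ Hσ Hσl)).
  - intros σ Hσ Hσl. exact (proj1 (Hlevel σ Hσ Hσl)).
Qed.

Definition step (x : PT h * nat) (s : list bool) : PT h * nat * list bool :=
  epsilon (inhabits (x, s))
    (fun y => step_spec (fst x) (snd x) s (fst (fst y)) (snd (fst y)) (snd y)).

Lemma step_correct x s : PT_le (fst x) p ->
  step_spec (fst x) (snd x) s (fst (fst (step x s))) (snd (fst (step x s))) (snd (step x s)).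
Proof.
  intro Hx. unfold step. apply epsilon_spec.
  destruct (step_exists (fst x) (snd x) s Hx) as (c' & L' & t & H).
  now exists (c', L', t).
Qed.

Fixpoint stage (n : nat) : PT h * nat :=
  match n with
  | 0 => (p, 0)
  | S n => fst (step (stage n) (bits_of_nat n))
  end.

Definition target (n : nat) : list bool := snd (step (stage n) (bits_of_nat n)).

Lemma stage_le_p n : PT_le (fst (stage n)) p.
Proof.
  induction n as [|n IH]; [apply PT_le_refl|].
  destruct (step_correct (stage n) (bits_of_nat n) IH) as [[Hle _] _].
  exact (PT_le_trans _ _ _ Hle IH).
Qed.

Lemma stage_spec n :
  step_spec (fst (stage n)) (snd (stage n)) (bits_of_nat n)
    (fst (stage (S n))) (snd (stage (S n))) (target n).
Proof. exact (step_correct _ _ (stage_le_p n)). Qed.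

Definition fusion_of_stages : PT h :=
  fusion h_pos (fun n => fst (stage n)) (fun n => snd (stage n))
    (fun n => proj1 (stage_spec n)).

Lemma fusion_forces_target n : forces fusion_of_stages (target n).
Proof.
  apply forces_mem_of_dense; [exact (@PT_le_refl h) | exact (@PT_le_trans h)|].
  intros r1 Hr1.
  destruct (tree_extend h_pos r1 [] (snd (stage n)) (tree_nil r1)) as [σ [Hσl Hσ]].
  simpl in Hσ. set (r := restrict r1 σ Hσ).
  assert (Hr : PT_le r (fst (stage (S n)))).
  { intros x Hx. exact (fusion_le h_pos _ _ _ (S n) x (Hr1 x (restrict_le r1 σ Hσ x Hx))). }
  exists r. split; [apply restrict_le|].
  destruct (stage_spec n) as (_ & _ & Hforce).
  apply (Hforce σ (Hr σ (restrict_mem r1 σ Hσ)) Hσl r Hr). now intros x [].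
Qed.

Lemma dense_set_forced : exists E : list bool -> Prop, dense_seq E /\
  exists q, PT_le q p /\ forall s, E s -> forces q s.
Proof.
  exists (fun t => exists n, t = target n). split.
  - intro s. destruct (bits_of_nat_surj s) as [n <-].
    exists (target n). split; [exact (proj1 (proj2 (stage_spec n))) | now exists n].
  - exists fusion_of_stages. split.
    + exact (fusion_le h_pos _ _ _ 0).
    + intros s [n ->]. apply fusion_forces_target.
Qed.

End CohenPreserving.

Theorem lemma3p4 (h : nat -> nat) (Hh : forall n, 1 < h n) :
  cohen_preserving (PT h) (@PT_le h).
Proof.
  intros p N HD.
  assert (h_pos : forall n, 0 < h n) by (intro n; specialize (Hh n); lia).
  exact (dense_set_forced h h_pos p N HD).
Qed.
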